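(* Let $\varepsilon>0$ and let $R_1,\dots,R_n:[d]\to\mathcal Y$ be $\varepsilon$-private randomizers with $\mathcal Y$ finite and $d$ even, and let $|\vec R|_{\neq}$ be the number of distinct randomizers among $R_1,\dots,R_n$. Suppose $d>4(e^{2\varepsilon}-1)^2\ln(12|\mathcal Y|\cdot|\vec R|_{\neq})$. If $H$ is chosen uniformly at random among subsets of $[d]$ of size $d/2$, then with probability at least $5/6$ over $H$: for every $y\in\mathcal Y$ and every $i\in[n]$, $y$ is not $\left((e^{2\varepsilon}-1)\sqrt{\frac4d\ln(12|\mathcal Y|\cdot|\vec R|_{\neq})}\right)$-leaky with respect to $H,R_i$.
   Context: A randomizer $R:[d]\to\mathcal Y$ is a randomized map into a message set $\mathcal Y$; it is $\varepsilon$-private if for all $x,x'\in[d]$ and all $Y\subseteq\mathcal Y$, $\Pr[R(x)\in Y]\le e^{\varepsilon}\Pr[R(x')\in Y]$. $\mathbf U$ is the uniform distribution on $[d]$; for $H\subseteq[d]$, $\mathbf U_H$ is the uniform distribution on $H$; $R(\mathbf U)$ (resp. $R(\mathbf U_H)$) is the distribution of $R(\hat x)$ where $\hat x\sim\mathbf U$ (resp. $\hat x\sim \mathbf U_H$). For $H\subset[d]$ with $|H|=d/2$, a message $y$ is $v$-leaky with respect to $H,R$ if $\left|\ln\frac{\Pr[R(\mathbf U_H)=y]}{\Pr[R(\mathbf U)=y]}\right|>v$ (messages with $\Pr[R(\mathbf U)=y]=0$ are regarded as not leaky). *)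

From Stdlib Require Import Reals ClassicalEpsilon.
From mathcomp Require Import all_boot.
Local Open Scope R_scope.
Set Implicit Arguments. Unset Strict Implicit. Unset Printing Implicit Defensive.

Definition asbool (P : Prop) : bool :=
  if excluded_middle_informative P then true else false.

(* A randomizer [d] -> Y, given by its probability mass function:
   Rz x y = Pr[R(x) = y]. *)
Definition randomizer (d : nat) (Y : finType) := 'I_d -> Y -> R.

Definition is_randomizer (d : nat) (Y : finType) (Rz : randomizer d Y) : Prop :=
  (forall x y, (0 <= Rz x y)) /\
  (forall x, \big[Rplus/R0]_(y : Y) Rz x y = R1).

Definition prob_in (d : nat) (Y : finType) (Rz : randomizer d Y) (x : 'I_d)
  (S : {set Y}) : R := \big[Rplus/R0]_(y in S) Rz x y.

Definition eps_private (eps : R) (d : nat) (Y : finType) (Rz : randomizer d Y) : Prop :=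
  forall (x x' : 'I_d) (S : {set Y}),
    (prob_in Rz x S <= exp eps * prob_in Rz x' S).

(* Pr[R(U) = y], U uniform on [d] *)
Definition prob_U (d : nat) (Y : finType) (Rz : randomizer d Y) (y : Y) : R :=
  (/ INR d * \big[Rplus/R0]_(x : 'I_d) Rz x y).

(* Pr[R(U_H) = y], U_H uniform on H *)
Definition prob_UH (d : nat) (Y : finType) (Rz : randomizer d Y) (H : {set 'I_d})
  (y : Y) : R :=
  (/ INR #|H| * \big[Rplus/R0]_(x in H) Rz x y).

(* y is v-leaky w.r.t. H, R (messages with Pr[R(U)=y] = 0 are not leaky) *)
Definition leaky (v : R) (d : nat) (Y : finType) (Rz : randomizer d Y)
  (H : {set 'I_d}) (y : Y) : Prop :=
  prob_U Rz y <> R0 /\ (Rabs (ln (prob_UH Rz H y / prob_U Rz y)) > v).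

(* number of distinct randomizers among Rs 0, ..., Rs (n-1):
   indices i such that no earlier j has Rs j = Rs i *)
Definition num_distinct (n d : nat) (Y : finType) (Rs : 'I_n -> randomizer d Y) : nat :=
  #|[set i : 'I_n | [forall j : 'I_n, (j < i)%N ==> ~~ asbool (Rs j = Rs i)]]|.

Definition prob_half_subsets (d : nat) (P : {set 'I_d} -> Prop) : R :=
  (INR #|[set H : {set 'I_d} | (#|H| == d./2)%N && asbool (P H)]|
   / INR #|[set H : {set 'I_d} | (#|H| == d./2)%N]|).

From HB Require Import structures.
From Stdlib Require Import Reals Lra Psatz Classical ClassicalEpsilon.
From Coquelicot Require Import Coquelicot.
From mathcomp Require Import all_boot zify.
Local Open Scope R_scope.
Set Implicit Arguments.
Unset Strict Implicit.
Unset Printing Implicit Defensive.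

(* Fix a randomizer R and a message y, and let p x = Pr[R(x) = y] and P = \sum_x p x.
   For a half-set H, Pr[R(U_H) = y] / Pr[R(U) = y] = 1 + 2 D / P, where
   D = \sum_(x in H) p x - P / 2, so y can only be leaky when |D| is large.  Privacy puts
   every p x in [a, e^eps a] with a = min p.  A Chernoff bound for sums over a uniform
   half-set follows from E[\prod_(x in H) (1 + u x)] <= \prod_x (1 + u x / 2) for u >= 0,
   itself a consequence of the fact that a fixed set S lies in at most a 2^-|S| fraction of
   the half-sets; with cosh t <= exp (t^2) it gives Pr[|D| > s] <= 2 exp (- s^2 / (d w^2))
   for w = (e^eps - 1) a.  The hypothesis on d makes this at most 1 / (6 |Y| k) for the
   relevant s, and a union bound over the messages and the k distinct randomizers ends the
   proof. *)

HB.instance Definition _ := Monoid.isComLaw.Build R R0 Rplus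
  (fun x y z => esym (Rplus_assoc x y z)) Rplus_comm Rplus_0_l.
HB.instance Definition _ := Monoid.isComLaw.Build R R1 Rmult
  (fun x y z => esym (Rmult_assoc x y z)) Rmult_comm Rmult_1_l.
HB.instance Definition _ := Monoid.isMulLaw.Build R R0 Rmult Rmult_0_l Rmult_0_r.
HB.instance Definition _ :=
  Monoid.isAddLaw.Build R Rmult Rplus Rmult_plus_distr_r Rmult_plus_distr_l.

Lemma derive_ge0_le (f df : R -> R) (a b : R) :
  (forall x, a <= x <= b -> is_derive f x (df x)) ->
  (forall x, a <= x <= b -> 0 <= df x) -> a <= b -> f a <= f b.
Proof.
move=> f'_df df_ge0 le_ab.
case: (MVT_gen f a b df); rewrite ?Rmin_left ?Rmax_right //.
- by move=> x ?; apply: f'_df; lra.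
- move=> x ?; apply/continuity_pt_filterlim/ex_derive_continuous.
  by exists (df x); apply: f'_df.
- move=> c [c_in E]; have := df_ge0 c c_in; nra.
Qed.

Lemma exp_le (x y : R) : x <= y -> exp x <= exp y.
Proof. by case=> [/exp_increasing/Rlt_le | ->]; [|right]. Qed.

Lemma sinh_le_mul_exp (t : R) : 0 <= t -> sinh t <= t * exp t.
Proof.
move=> t_ge0; rewrite /sinh.
have := exp_ineq1_le (- (2 * t)).
have <- : exp (- (2 * t)) * exp t = exp (- t) by rewrite -exp_plus; f_equal; ring.
have := exp_pos t; nra.
Qed.

Lemma exp_le_2_exp_sqr (t : R) : exp t <= 2 * exp (t ^ 2).
Proof.
have <- : exp (t ^ 2 - t) * exp t = exp (t ^ 2) by rewrite -exp_plus; f_equal; ring.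
have : 1 / 2 <= exp (t ^ 2 - t) by have := exp_ineq1_le (t ^ 2 - t); nra.
have := exp_pos t; nra.
Qed.

Lemma cosh_le_exp_sqr (y : R) : 0 <= y -> cosh y <= exp (y ^ 2).
Proof.
move=> y_ge0; suff : exp (0 ^ 2) - cosh 0 <= exp (y ^ 2) - cosh y.
  by rewrite cosh_0 pow_ne_zero // exp_0; lra.
apply: (derive_ge0_le (f := fun t => exp (t ^ 2) - cosh t)
                      (df := fun t => 2 * t * exp (t ^ 2) - sinh t)) => // t [t_ge0 _].
- rewrite /cosh /sinh; auto_derive => //.
  by replace (t * (t * 1)) with (t ^ 2) by ring; field.
- have := sinh_le_mul_exp t_ge0; have := exp_le_2_exp_sqr t; nra.
Qed.

Lemma mid_exp_le (z : R) : 0 <= z -> (1 + exp z) / 2 <= exp (z / 2 + z ^ 2 / 4).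
Proof.
move=> z_ge0; have := @cosh_le_exp_sqr (z / 2) ltac:(lra); rewrite /cosh.
have -> : exp (z / 2 + z ^ 2 / 4) = exp (z / 2) * exp ((z / 2) ^ 2).
  by rewrite -exp_plus; f_equal; field.
have <- : exp (z / 2) * exp (z / 2) = exp z by rewrite -exp_plus; f_equal; field.
have <- : exp (z / 2) * exp (- (z / 2)) = 1 by rewrite -exp_plus -exp_0; f_equal; ring.
have := exp_pos (z / 2); nra.
Qed.

Lemma ln_le_sub1 (x : R) : 0 < x -> ln x <= x - 1.
Proof. by move=> x_gt0; have := exp_ineq1_le (ln x); rewrite exp_ln //; lra. Qed.

Lemma Rabs_ln_le (r v : R) : 0 <= v < 1 -> Rabs (r - 1) <= v / 2 -> Rabs (ln r) <= v.
Proof.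
move=> v_bnd /Rabs_le_between r_bnd; have r_gt0 : 0 < r by lra.
apply: Rabs_le; split; last by have := ln_le_sub1 r_gt0; lra.
have := ln_le_sub1 (Rinv_0_lt_compat _ r_gt0); rewrite ln_Rinv //.
suff : / r <= 1 + v by lra.
apply: (Rmult_le_reg_r r) => //; rewrite Rinv_l; nra.
Qed.

Lemma scaled_sqrt_bound (c d L : R) :
  0 <= c -> 0 <= L -> d > 4 * c ^ 2 * L -> 0 <= c * sqrt (4 / d * L) < 1.
Proof.
move=> c_ge0 L_ge0 d_gt; have d_gt0 : 0 < d by nra.
have q2 : sqrt (4 / d * L) * sqrt (4 / d * L) = 4 / d * L.
  by apply/sqrt_sqrt/Rmult_le_pos => //; apply/Rlt_le/Rdiv_lt_0_compat; lra.
have := sqrt_pos (4 / d * L); set q := sqrt _ in q2 * => q_ge0.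
suff : (c * q) ^ 2 < 1 by nra.
rewrite Rpow_mult_distr (_ : q ^ 2 = 4 / d * L); last by rewrite -q2; ring.
by apply: (Rmult_lt_reg_r d) => //; rewrite (_ : _ * d = 4 * c ^ 2 * L); [lra | field; lra].
Qed.

Lemma privacy_exponent_ge (E a d P L : R) :
  1 < E -> 0 < a -> 0 < d -> d * a <= P -> 0 <= L ->
  L <= ((E ^ 2 - 1) * sqrt (4 / d * L) * P / 4) ^ 2 / (d * ((E - 1) * a) ^ 2).
Proof.
move=> E_gt1 a_gt0 d_gt0 P_ge L_ge0.
have q2 : sqrt (4 / d * L) ^ 2 = 4 / d * L.
  by rewrite /= Rmult_1_r; apply/sqrt_sqrt/Rmult_le_pos => //; apply/Rlt_le/Rdiv_lt_0_compat; lra.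
set q := sqrt _ in q2 *; set K := (E + 1) * (P / (d * a)).
have K_ge2 : 2 <= K.
  suff : 1 <= P / (d * a) by rewrite /K; nra.
  apply: (Rmult_le_reg_r (d * a)); first nra.
  by rewrite /Rdiv Rmult_assoc Rinv_l; nra.
have -> : ((E ^ 2 - 1) * q * P / 4) ^ 2 / (d * ((E - 1) * a) ^ 2) = L * K ^ 2 / 4.
  have -> : ((E ^ 2 - 1) * q * P / 4) ^ 2 = (E ^ 2 - 1) ^ 2 * q ^ 2 * P ^ 2 / 16 by field.
  by rewrite q2 /K; field; repeat split; lra.
have K2_ge4 : 4 <= K ^ 2 by nra.
by have := Rmult_le_compat_l _ _ _ L_ge0 K2_ge4; lra.
Qed.

Lemma INR_addn a b : INR (a + b)%N = INR a + INR b.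
Proof. by rewrite -plusE plus_INR. Qed.

Lemma INR_muln a b : INR (a * b)%N = INR a * INR b.
Proof. by rewrite -multE mult_INR. Qed.

Lemma INR_expn a b : INR (a ^ b)%N = INR a ^ b.
Proof. by elim: b => [|b IH]; rewrite ?expnS ?INR_muln ?IH. Qed.

Lemma INR_sum (I : Type) (r : seq I) (P : pred I) (F : I -> nat) :
  INR (\sum_(i <- r | P i) F i) = \big[Rplus/R0]_(i <- r | P i) INR (F i).
Proof. exact: (big_morph INR INR_addn). Qed.

Lemma sumR_const (T : finType) (A : {pred T}) c :
  \big[Rplus/R0]_(x in A) c = INR #|A| * c.
Proof.
rewrite big_const; elim: #|A| => [|k IH]; first by rewrite /=; ring.
by rewrite iterS IH S_INR; ring.
Qed.

Lemma sumR_const_full (T : finType) c : \big[Rplus/R0]_(x : T) c = INR #|T| * c.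
Proof. by rewrite -sumR_const; apply: eq_bigl => x; rewrite inE. Qed.

Lemma exp_sumR (I : Type) (r : seq I) (P : pred I) (F : I -> R) :
  exp (\big[Rplus/R0]_(i <- r | P i) F i) = \big[Rmult/R1]_(i <- r | P i) exp (F i).
Proof. exact: (big_morph exp exp_plus exp_0). Qed.

Lemma sumR_ge0 (I : Type) (r : seq I) (P : pred I) (F : I -> R) :
  (forall i, P i -> 0 <= F i) -> 0 <= \big[Rplus/R0]_(i <- r | P i) F i.
Proof. by move=> F_ge0; apply: big_ind => //; [lra | move=> *; lra]. Qed.

Lemma leR_sum (I : Type) (r : seq I) (P : pred I) (F G : I -> R) :
  (forall i, P i -> F i <= G i) ->
  \big[Rplus/R0]_(i <- r | P i) F i <= \big[Rplus/R0]_(i <- r | P i) G i.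
Proof. by move=> leFG; apply: big_ind2 => //; [lra | move=> *; lra]. Qed.

Lemma leR_prod (I : Type) (r : seq I) (P : pred I) (F G : I -> R) :
  (forall i, P i -> 0 <= F i <= G i) ->
  \big[Rmult/R1]_(i <- r | P i) F i <= \big[Rmult/R1]_(i <- r | P i) G i.
Proof.
move=> leFG; suff [] : 0 <= \big[Rmult/R1]_(i <- r | P i) F i <=
                       \big[Rmult/R1]_(i <- r | P i) G i by [].
by apply: (big_ind2 (fun a b => 0 <= a <= b)) => //; [lra | move=> a b c e [? ?] [? ?]; split; nra].
Qed.

Lemma prod1D_expand (T : finType) (a : T -> R) :
  \big[Rmult/R1]_x (1 + a x) =
  \big[Rplus/R0]_(f : {ffun T -> bool}) \big[Rmult/R1]_x (if f x then a x else 1).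
Proof.
rewrite -(bigA_distr_bigA (fun x (j : bool) => if j then a x else 1)).
by apply: eq_bigr => x _; rewrite big_bool /=; ring.
Qed.

Lemma prodR_if_const (T : finType) (f : T -> bool) c :
  \big[Rmult/R1]_x (if f x then c else 1) = c ^ #|[set x | f x]|.
Proof.
rewrite -big_mkcond /=; under eq_bigl do rewrite -[f _]inE.
by rewrite big_const; elim: #|_| => //= k ->.
Qed.

Lemma exists_minimizer (T : finType) (f : T -> R) (x1 : T) :
  exists x0, forall x, f x0 <= f x.
Proof.
suff [x0 min_x0] : exists x0, forall x, x \in enum T -> f x0 <= f x.
  by exists x0 => x; apply: min_x0; rewrite mem_enum.
elim: (enum T) => [|y s [x0 IH]]; first by exists x1.
have [le_yx0 | lt_x0y] := Rle_lt_dec (f y) (f x0).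
  by exists y => x; rewrite inE => /orP[/eqP -> | /IH]; lra.
by exists x0 => x; rewrite inE => /orP[/eqP -> | /IH]; lra.
Qed.

Lemma asboolP (P : Prop) : reflect P (asbool P).
Proof. by rewrite /asbool; case: excluded_middle_informative => ?; constructor. Qed.

Lemma bin_sub_mul_exp2_le m s :
  (s <= m)%N -> ('C(m.*2 - s, m - s) * 2 ^ s <= 'C(m.*2, m))%N.
Proof.
elim: s => [|s IH] lt_sm; first by rewrite !subn0 muln1.
apply: leq_trans (IH (ltnW lt_sm)); rewrite expnS mulnA; apply: leq_mul => //.
have k_gt0 : (0 < m - s)%N by rewrite subn_gt0.
have := mul_bin_diag (m.*2 - s) (m - s.+1).
rewrite -subnS -[in RHS]subSn // subSS => E.
rewrite -(leq_pmul2l k_gt0) -E; nia.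
Qed.

Section HalfSubsets.

Variables (T : finType) (m : nat).
Hypothesis cardT : #|T| = m.*2.

Local Notation halfsets := [set H : {set T} | #|H| == m].

Lemma card_supsets_mul_exp2_le (S : {set T}) :
  (#|[set H in halfsets | S \subset H]| * 2 ^ #|S| <= 'C(m.*2, m))%N.
Proof.
set sup := [set H in halfsets | _].
have [le_Sm | lt_mS] := leqP #|S| m; last first.
  suff -> : sup = set0 by rewrite cards0.
  apply/setP => H; rewrite !inE; apply/negbTE/andP => -[/eqP cardH /subset_leq_card].
  by rewrite cardH leqNgt lt_mS.
apply: (leq_trans _ (bin_sub_mul_exp2_le le_Sm)); apply: leq_mul => //.
have inj : {in sup &, injective (fun H => H :\: S)}.
  move=> H1 H2; rewrite !inE => /andP[_ /setIidPr sSH1] /andP[_ /setIidPr sSH2] E.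
  by rewrite -(setID H1 S) -(setID H2 S) sSH1 sSH2 E.
rewrite -(card_in_imset inj).
have -> : (m.*2 - #|S| = #|~: S|)%N by rewrite -cardT -(cardsC S) addKn.
rewrite -cards_draws; apply/subset_leq_card/subsetP => _ /imsetP[H + ->].
rewrite !inE => /andP[/eqP cardH sSH].
rewrite cardsD (setIidPr sSH) cardH eqxx andbT.
by apply/subsetP => x; rewrite !inE => /andP[].
Qed.

Lemma sum_halfsets_prod1D_le (u : T -> R) : (forall x, 0 <= u x) ->
  \big[Rplus/R0]_(H in halfsets) \big[Rmult/R1]_(x in H) (1 + u x)
  <= INR 'C(m.*2, m) * \big[Rmult/R1]_x (1 + u x / 2).
Proof.
move=> u_ge0.
have expandH (H : {set T}) : \big[Rmult/R1]_(x in H) (1 + u x) =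
    \big[Rplus/R0]_(f : {ffun T -> bool})
      \big[Rmult/R1]_x (if f x then (if x \in H then u x else 0) else 1).
  by rewrite big_mkcond -prod1D_expand; apply: eq_bigr => x _; case: (x \in H); ring.
rewrite (eq_bigr _ (fun H _ => expandH H)) exchange_big prod1D_expand big_distrr /=.
apply: leR_sum => f _; set S := [set x | f x].
set P := \big[Rmult/R1]_x (if f x then u x else 1).
have P_ge0 : 0 <= P.
  by apply: big_ind => [|a b ? ?|x _]; [lra | nra | case: (f x) => //; lra].
have restrict (H : {set T}) :
    \big[Rmult/R1]_x (if f x then (if x \in H then u x else 0) else 1) =
    if S \subset H then P else 0.
  case: (boolP (S \subset H)) => [/subsetP sSH | /subsetPn[x]].
    by apply: eq_bigr => x _; case fx: (f x); rewrite // sSH // inE fx.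
  by rewrite inE => fx /negbTE xNH; rewrite (bigD1 x) //= fx xNH Rmult_0_l.
have halve : \big[Rmult/R1]_x (if f x then u x / 2 else 1) = (/ 2) ^ #|S| * P.
  rewrite -prodR_if_const /P -big_split /=.
  by apply: eq_bigr => x _; case: (f x); field.
rewrite (eq_bigr _ (fun H _ => restrict H)) -big_mkcondr halve.
rewrite (eq_bigl (mem [set H in halfsets | S \subset H])); last by move=> H; rewrite !inE.
rewrite sumR_const -Rmult_assoc; apply: Rmult_le_compat_r => //.
have := leP (card_supsets_mul_exp2_le S).
move/le_INR; rewrite INR_muln INR_expn pow_inv.
have pow_gt0 := pow_lt 2 #|S| ltac:(lra).
move=> le_C; apply: (Rmult_le_reg_r (2 ^ #|S|)) => //.
by rewrite Rmult_assoc Rinv_l ?Rmult_1_r //; lra.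
Qed.

Definition dev (b : T -> R) (H : {set T}) :=
  \big[Rplus/R0]_(x in H) b x - \big[Rplus/R0]_x b x / 2.

Lemma dev_affine (b : T -> R) c k (H : {set T}) : #|H| = m ->
  dev (fun x => c + k * b x) H = k * dev b H.
Proof.
move=> cardH; rewrite /dev !big_split /= -!big_distrr /= sumR_const.
by rewrite sumR_const_full cardH cardT -addnn INR_addn; field.
Qed.

Lemma sum_halfsets_exp_le (b : T -> R) (w lam : R) :
  (forall x, 0 <= b x <= w) -> 0 <= lam ->
  \big[Rplus/R0]_(H in halfsets) exp (lam * \big[Rplus/R0]_(x in H) b x)
  <= INR 'C(m.*2, m)
     * exp (lam * \big[Rplus/R0]_x b x / 2 + INR #|T| * (lam ^ 2 * w ^ 2 / 4)).
Proof.
move=> b_bnd lam_ge0; set Sb := \big[Rplus/R0]_x b x.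
have expand (H : {set T}) : exp (lam * \big[Rplus/R0]_(x in H) b x) =
                \big[Rmult/R1]_(x in H) (1 + (exp (lam * b x) - 1)).
  by rewrite big_distrr exp_sumR /=; apply: eq_bigr => x _; ring.
rewrite (eq_bigr _ (fun H _ => expand H)).
apply: Rle_trans (sum_halfsets_prod1D_le _) _.
  by move=> x; have := exp_ineq1_le (lam * b x); have := b_bnd x; nra.
apply: Rmult_le_compat_l; first exact: pos_INR.
have -> : lam * Sb / 2 + INR #|T| * (lam ^ 2 * w ^ 2 / 4) =
          \big[Rplus/R0]_x (lam * b x / 2 + lam ^ 2 * w ^ 2 / 4).
  rewrite big_split /= sumR_const_full.
  rewrite (eq_bigr (fun x => lam / 2 * b x)); last by move=> x _; field.
  by rewrite -big_distrr /= -/Sb; field.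
rewrite exp_sumR; apply: leR_prod => x _; have := b_bnd x => b_x.
have lamb_ge0 : 0 <= lam * b x by nra.
split; first by have := exp_ineq1_le (lam * b x); nra.
apply: Rle_trans (_ : exp (lam * b x / 2 + (lam * b x) ^ 2 / 4) <= _).
  by have := mid_exp_le lamb_ge0; lra.
apply: exp_le; rewrite Rpow_mult_distr.
suff : b x ^ 2 <= w ^ 2 by have := pow2_ge_0 lam; nra.
by apply: pow_incr; lra.
Qed.

Lemma card_halfsets_dev_gt (b : T -> R) (w lam s : R) :
  (forall x, 0 <= b x <= w) -> 0 <= lam ->
  INR #|[set H in halfsets | asbool (dev b H > s)]|
  <= INR 'C(m.*2, m) * exp (- lam * s + INR #|T| * lam ^ 2 * w ^ 2 / 4).
Proof.
move=> b_bnd lam_ge0.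
set A := [set H in halfsets | _]; set Sb := \big[Rplus/R0]_x b x.
have markov : INR #|A| * exp (lam * (Sb / 2 + s)) <=
              \big[Rplus/R0]_(H in halfsets) exp (lam * \big[Rplus/R0]_(x in H) b x).
  rewrite -sumR_const; apply: Rle_trans
    (_ : \big[Rplus/R0]_(H in A) exp (lam * \big[Rplus/R0]_(x in H) b x) <= _).
    apply: leR_sum => H; rewrite inE => /andP[_ /asboolP]; rewrite /dev -/Sb => dev_gt.
    by apply: exp_le; nra.
  rewrite [X in X <= _]big_mkcond [X in _ <= X]big_mkcond /=; apply: leR_sum => H _.
  rewrite inE; case: (H \in halfsets) => /=; last lra.
  by case: asbool; [lra | left; exact: exp_pos].
have := sum_halfsets_exp_le b_bnd lam_ge0; rewrite -/Sb => mgf.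
have e : exp (- lam * s + INR #|T| * lam ^ 2 * w ^ 2 / 4) * exp (lam * (Sb / 2 + s)) =
         exp (lam * Sb / 2 + INR #|T| * (lam ^ 2 * w ^ 2 / 4)).
  by rewrite -exp_plus; f_equal; field.
apply: (Rmult_le_reg_r _ _ _ (exp_pos (lam * (Sb / 2 + s)))).
by rewrite Rmult_assoc e; exact: Rle_trans markov mgf.
Qed.

Lemma card_halfsets_abs_dev_gt (b : T -> R) (w s : R) :
  (0 < m)%N -> 0 < w -> 0 <= s -> (forall x, 0 <= b x <= w) ->
  INR #|[set H in halfsets | asbool (Rabs (dev b H) > s)]|
  <= 2 * INR 'C(m.*2, m) * exp (- (s ^ 2 / (INR #|T| * w ^ 2))).
Proof.
move=> m_gt0 w_gt0 s_ge0 b_bnd.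
have T_gt0 : 0 < INR #|T| by apply: lt_0_INR; apply/ltP; rewrite cardT double_gt0.
pose lam := 2 * s / (INR #|T| * w ^ 2).
have lam_ge0 : 0 <= lam.
  by apply: Rmult_le_pos; [lra | apply/Rlt_le/Rinv_0_lt_compat/Rmult_lt_0_compat/pow_lt].
have optimal : - lam * s + INR #|T| * lam ^ 2 * w ^ 2 / 4 = - (s ^ 2 / (INR #|T| * w ^ 2)).
  by rewrite /lam; field; lra.
have bw_bnd x : 0 <= w + -1 * b x <= w by have := b_bnd x; lra.
have := card_halfsets_dev_gt s bw_bnd lam_ge0.
have := card_halfsets_dev_gt s b_bnd lam_ge0.
rewrite optimal; set A1 := [set H in halfsets | _]; set A2 := [set H in halfsets | _].
move=> le_A1 le_A2; apply: Rle_trans (_ : INR (#|A1| + #|A2|) <= _); last first.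
  by rewrite INR_addn; lra.
apply/le_INR/leP/(leq_trans _ (leq_card_setU A1 A2))/subset_leq_card/subsetP => H.
rewrite !inE => /andP[cardH /asboolP abs_dev_gt]; rewrite cardH dev_affine /=; last exact/eqP.
move: abs_dev_gt; rewrite /Rabs; case: Rcase_abs => _ dev_gt; apply/orP.
  by right; apply/asboolP; lra.
by left; apply/asboolP; lra.
Qed.

Lemma abs_ln_ratio_le (p : T -> R) (H : {set T}) (v : R) :
  (0 < m)%N -> #|H| = m -> 0 <= v < 1 -> 0 < \big[Rplus/R0]_x p x ->
  Rabs (dev p H) <= v * \big[Rplus/R0]_x p x / 4 ->
  Rabs (ln ((/ INR #|H| * \big[Rplus/R0]_(x in H) p x) / (/ INR #|T| * \big[Rplus/R0]_x p x)))
  <= v.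
Proof.
move=> /ltP/lt_0_INR m_gt0 cardH v_bnd; set P := \big[Rplus/R0]_x p x => P_gt0 dev_le.
apply: Rabs_ln_le => //; rewrite cardH cardT -addnn INR_addn.
have -> : / INR m * \big[Rplus/R0]_(x in H) p x / (/ (INR m + INR m) * P) - 1 =
          2 / P * dev p H.
  by rewrite /dev -/P; field; lra.
have two_P_ge0 : 0 <= 2 / P by apply/Rlt_le/Rdiv_lt_0_compat; lra.
rewrite Rabs_mult (Rabs_right _ (Rle_ge _ _ two_P_ge0)).
by apply: Rle_trans (Rmult_le_compat_l _ _ _ two_P_ge0 dev_le) _; right; field; lra.
Qed.

Lemma card_halfsets_ln_ratio_gt (p : T -> R) (eps L : R) :
  0 < eps -> 0 <= L -> 0 < \big[Rplus/R0]_x p x ->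
  (forall x, 0 <= p x) -> (forall x x', p x <= exp eps * p x') ->
  INR #|T| > 4 * (exp (2 * eps) - 1) ^ 2 * L ->
  INR #|[set H in halfsets | asbool (Rabs (ln ((/ INR #|H| * \big[Rplus/R0]_(x in H) p x)
                                            / (/ INR #|T| * \big[Rplus/R0]_x p x)))
                           > (exp (2 * eps) - 1) * sqrt (4 / INR #|T| * L))]|
  <= 2 * INR 'C(m.*2, m) * exp (- L).
Proof.
move=> eps_gt0 L_ge0 P_gt0 p_ge0 p_priv d_gt.
set P := \big[Rplus/R0]_x p x in P_gt0 *; set d := INR #|T| in d_gt *.
have [x0 _ | T0] := pickP (@predT T); last first.
  by move: P_gt0; rewrite /P (eq_bigl _ _ T0) big_pred0_eq; lra.
have m_gt0 : (0 < m)%N by rewrite -double_gt0 -cardT; apply/card_gt0P; exists x0.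
have d_gt0 : 0 < d by apply/lt_0_INR/ltP; rewrite cardT double_gt0.
(* Offsetting [p] by its minimum [a], not by its mean, keeps the range of [p - a] down to
   [(exp eps - 1) * a]. *)
have {x0} [x0 min_x0] := exists_minimizer p x0; set a := p x0 in min_x0.
have P_ge : d * a <= P by rewrite /d -sumR_const_full; apply: leR_sum.
have P_le : P <= d * (exp eps * a).
  by rewrite /d -sumR_const_full; apply: leR_sum => x _; apply: p_priv.
have a_gt0 : 0 < a.
  apply: Rnot_le_lt => a_le0; have a0 : a = 0 by have := p_ge0 x0; rewrite -/a; lra.
  by move: P_le; rewrite a0 !Rmult_0_r; lra.
have e_gt1 : 1 < exp eps by rewrite -exp_0; apply: exp_increasing.
set w := (exp eps - 1) * a; have w_gt0 : 0 < w by rewrite /w; nra.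
have b_bnd x : 0 <= - a + 1 * p x <= w.
  by have := min_x0 x; have := p_priv x x0; rewrite -/a /w; lra.
have e2 : exp (2 * eps) = exp eps ^ 2 by rewrite /= Rmult_1_r -exp_plus; f_equal; ring.
have c_ge0 : 0 <= exp (2 * eps) - 1 by rewrite e2; nra.
have := scaled_sqrt_bound c_ge0 L_ge0 d_gt.
set v := (exp (2 * eps) - 1) * sqrt (4 / d * L) => v_bnd.
apply: (Rle_trans _ (INR #|[set H in halfsets |
  asbool (Rabs (dev (fun x => - a + 1 * p x) H) > v * P / 4)]|)).
  apply/le_INR/leP/subset_leq_card/subsetP => H; rewrite !inE => /andP[cardH /asboolP ln_gt].
  rewrite cardH dev_affine ?Rmult_1_l /=; last exact/eqP.
  apply/asboolP/Rnot_le_lt => dev_le; apply: (Rlt_not_le _ _ ln_gt).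
  exact: abs_ln_ratio_le m_gt0 (eqP cardH) v_bnd P_gt0 dev_le.
apply: Rle_trans (card_halfsets_abs_dev_gt m_gt0 w_gt0 _ b_bnd) _; first nra.
apply/Rmult_le_compat_l/exp_le; first by have := pos_INR 'C(m.*2, m); lra.
by rewrite -/d /v /w e2; have := privacy_exponent_ge e_gt1 a_gt0 d_gt0 P_ge L_ge0; lra.
Qed.

End HalfSubsets.

Lemma eps_private_pointwise (eps : R) d (Y : finType) (Rz : randomizer d Y) y :
  eps_private eps Rz -> forall x x', Rz x y <= exp eps * Rz x' y.
Proof. by move=> priv x x'; have := priv x x' [set y]; rewrite /prob_in !big_set1. Qed.

Lemma card_halfsets_leaky (eps L : R) d (Y : finType) (Rz : randomizer d Y) y :
  ~~ odd d -> 0 < eps -> 0 <= L -> is_randomizer Rz -> eps_private eps Rz ->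
  INR d > 4 * (exp (2 * eps) - 1) ^ 2 * L ->
  INR #|[set H : {set 'I_d} | (#|H| == d./2) &&
          asbool (leaky ((exp (2 * eps) - 1) * sqrt (4 / INR d * L)) Rz H y)]|
  <= 2 * INR 'C(d, d./2) * exp (- L).
Proof.
move=> d_even eps_gt0 L_ge0 [Rz_ge0 _] Rz_priv d_gt.
set v := (exp (2 * eps) - 1) * sqrt _; set m := d./2; have cardT : #|'I_d| = m.*2.
  by rewrite card_ord -[LHS]odd_double_half (negbTE d_even).
set P := \big[Rplus/R0]_x Rz x y.
have [P_gt0 | P_le0] := Rlt_le_dec 0 P; last first.
  suff -> : [set H : {set 'I_d} | (#|H| == m) && asbool (leaky v Rz H y)] = set0.
    by rewrite cards0 /=; have := pos_INR 'C(d, m); have := exp_pos (- L); nra.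
  apply/setP => H; rewrite !inE; apply/negbTE/andP => -[_ /asboolP[prob_U_neq0 _]].
  apply: prob_U_neq0; rewrite /prob_U -/P.
  by rewrite (Rle_antisym _ _ P_le0 (sumR_ge0 _ _)) ?Rmult_0_r.
have dE : d = m.*2 by rewrite -cardT card_ord.
rewrite [X in 'C(X, _)]dE.
have := card_halfsets_ln_ratio_gt cardT eps_gt0 L_ge0 P_gt0 (Rz_ge0^~ y)
          (eps_private_pointwise y Rz_priv).
rewrite card_ord => /(_ d_gt); apply: Rle_trans.
apply/le_INR/leP/subset_leq_card/subsetP => H; rewrite !inE.
by case/andP => -> /asboolP[_ leak]; apply/asboolP.
Qed.

Definition first_occurrences (A : Type) n (f : 'I_n -> A) :=
  [set i : 'I_n | [forall j : 'I_n, (j < i)%N ==> ~~ asbool (f j = f i)]].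

Lemma first_occurrenceP (A : Type) n (f : 'I_n -> A) i :
  exists2 j, j \in first_occurrences f & f j = f i.
Proof.
have fi_eq : asbool (f i = f i) by apply/asboolP.
case: (@arg_minnP _ i (fun j => asbool (f j = f i)) (fun j => nat_of_ord j) fi_eq).
move=> j /asboolP fj_eq j_min.
exists j => //; rewrite inE; apply/forallP => j'; apply/implyP => lt_j'j.
apply/asboolP => fj'_eq; have /j_min : asbool (f j' = f i) by apply/asboolP; rewrite fj'_eq.
by rewrite leqNgt lt_j'j.
Qed.

Lemma card_bigcup_le (I T : finType) (r : seq I) (P : pred I) (F : I -> {set T}) :
  (#|\bigcup_(i <- r | P i) F i| <= \sum_(i <- r | P i) #|F i|)%N.
Proof.
apply: (big_ind2 (fun (X : {set T}) k => #|X| <= k)%N) => [|X1 k1 X2 k2 ? ?|//].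
  by rewrite cards0.
by apply: leq_trans (leq_card_setU X1 X2) _; apply: leq_add.
Qed.

Lemma card_some_bad_le (T Y : finType) (A : Type) n (f : 'I_n -> A)
    (good : pred {set T}) (bad : A -> Y -> {set T} -> Prop) (bound : R) :
  (forall j y, j \in first_occurrences f ->
     INR #|[set H | good H && asbool (bad (f j) y H)]| <= bound) ->
  INR #|[set H | good H && ~~ asbool (forall y i, ~ bad (f i) y H)]|
  <= INR #|first_occurrences f| * (INR #|Y| * bound).
Proof.
move=> bad_le; set D := first_occurrences f.
pose B j y := [set H | good H && asbool (bad (f j) y H)].
have sub : [set H | good H && ~~ asbool (forall y i, ~ bad (f i) y H)]
           \subset \bigcup_(j in D) \bigcup_(y : Y) B j y.
  apply/subsetP => H; rewrite inE => /andP[goodH /asboolP].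
  move=> /not_all_ex_not[y /not_all_ex_not[i /NNPP badH]].
  have [j jD fj_eq] := first_occurrenceP f i.
  apply/bigcupP; exists j => //; apply/bigcupP; exists y => //.
  by rewrite inE goodH; apply/asboolP; rewrite fj_eq.
apply: (Rle_trans _ (INR (\sum_(j in D) \sum_(y : Y) #|B j y|))).
  apply/le_INR/leP/(leq_trans (subset_leq_card sub))/(leq_trans (card_bigcup_le _ _ _)).
  by apply: leq_sum => j _; apply: card_bigcup_le.
rewrite -sumR_const -sumR_const_full INR_sum; apply: leR_sum => j jD.
by rewrite INR_sum; apply: leR_sum => y _; apply: bad_le.
Qed.

Lemma prob_half_subsets_ge d (P : {set 'I_d} -> Prop) (delta : R) :
  INR #|[set H : {set 'I_d} | (#|H| == d./2) && ~~ asbool (P H)]|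
    <= delta * INR 'C(d, d./2) ->
  prob_half_subsets P >= 1 - delta.
Proof.
rewrite /prob_half_subsets card_draws card_ord => bad_le.
have C_gt0 : 0 < INR 'C(d, d./2).
  by apply/lt_0_INR/ltP; rewrite bin_gt0 leq_half_double -addnn -addnS leq_addr.
set good := [set H | _ && asbool (P H)]; set bad := [set H | _ && ~~ _] in bad_le.
have : INR 'C(d, d./2) <= INR #|good| + INR #|bad|.
  rewrite -[X in 'C(X, _)](card_ord d) -card_draws -INR_addn; apply/le_INR/leP.
  apply: leq_trans (leq_card_setU good bad); apply/subset_leq_card/subsetP => H.
  by rewrite !inE => ->; case: asbool.
move=> le_sum; apply/Rle_ge; apply: (Rmult_le_reg_r (INR 'C(d, d./2))) => //.
by rewrite /Rdiv Rmult_assoc Rinv_l; lra.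
Qed.

Lemma mul_exp_neg_ln_le (x c : R) :
  0 <= x -> 0 <= c -> x * (2 * c * exp (- ln (12 * x))) <= c / 6.
Proof.
move=> [x_gt0 | <-] c_ge0; last lra.
by rewrite exp_Ropp exp_ln; [right; field; lra | lra].
Qed.

Theorem mainTheorem5 (eps : R) (d n : nat) (Y : finType)
  (Rs : 'I_n -> randomizer d Y) :
  (0 < eps) ->
  (forall i, is_randomizer (Rs i)) ->
  (forall i, eps_private eps (Rs i)) ->
  ~~ odd d ->
  (INR d > 4 * (exp (2 * eps) - 1) ^ 2
             * ln (12 * INR #|Y| * INR (num_distinct Rs))) ->
  (prob_half_subsets (fun H : {set 'I_d} =>
     forall (y : Y) (i : 'I_n),
       ~ leaky ((exp (2 * eps) - 1)
                  * sqrt (4 / INR d * ln (12 * INR #|Y| * INR (num_distinct Rs))))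
               (Rs i) H y)
   >= 5 / 6).
Proof.
move=> eps_gt0 Rs_rand Rs_priv d_even d_gt.
set N := INR #|Y| * INR (num_distinct Rs).
have LE : ln (12 * INR #|Y| * INR (num_distinct Rs)) = ln (12 * N) by rewrite /N Rmult_assoc.
rewrite LE in d_gt *; set L := ln (12 * N) in d_gt *.
rewrite (_ : 5 / 6 = 1 - 1 / 6); last field; apply: prob_half_subsets_ge.
apply: Rle_trans (card_some_bad_le (good := fun H => #|H| == d./2)
   (bad := fun Rz y H => leaky ((exp (2 * eps) - 1) * sqrt (4 / INR d * L)) Rz H y)
   (bound := 2 * INR 'C(d, d./2) * exp (- L)) _) _.
  move=> j y jD; apply: card_halfsets_leaky => //.
  have Y_ge1 : 1 <= INR #|Y| by apply: (le_INR 1); apply/leP/card_gt0P; exists y.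
  have k_ge1 : 1 <= INR (num_distinct Rs).
    by apply: (le_INR 1); apply/leP/card_gt0P; exists j.
  by rewrite /L -ln_1; apply: ln_le; [lra | rewrite /N; nra].
change (INR (num_distinct Rs) * (INR #|Y| * (2 * INR 'C(d, d./2) * exp (- L)))
        <= 1 / 6 * INR 'C(d, d./2)).
rewrite -Rmult_assoc (Rmult_comm (INR _)) -/N.
have := mul_exp_neg_ln_le (Rmult_le_pos _ _ (pos_INR #|Y|) (pos_INR (num_distinct Rs)))
          (pos_INR 'C(d, d./2)).
by rewrite -/N -/L; lra.
Qed.
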